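(* Let $n\equiv 9\pmod{12}$. (1) If there exists an $\mathrm{LKTS}(n)$, then there exists a $\mathrm{TOC}_3(n,5,3)$. (2) If there exists an $\mathrm{OLKTS}(n)$, then there exists a $\mathrm{TOC}_3(n+1,5,3)$.
   Context: $\mathcal{H}_q(n,w)$ is the set of all words of length $n$ over $\mathbb{Z}_q$ with exactly $w$ nonzero entries, with the Hamming distance. An $(n,d,w)_q$-code is a nonempty subset of $\mathcal{H}_q(n,w)$ in which any two distinct words have Hamming distance at least $d$; $A_q(n,d,w)$ is the maximum size of such a code and a code of this size is optimal. A $\mathrm{TOC}_q(n,d,w)$ is a partition of $\mathcal{H}_q(n,w)$ into mutually disjoint optimal $(n,d,w)_q$-codes. A Kirkman triple system $\mathrm{KTS}(n)$ is a Steiner triple system on an $n$-set (a family of 3-subsets such that every pair lies in exactly one of them) whose triples can be partitioned into parallel classes, each partitioning the point set. A large set $\mathrm{LKTS}(n)$ is a partition of all 3-subsets of an $n$-set into block sets of $\mathrm{KTS}(n)$'s on that set. An overlarge set $\mathrm{OLKTS}(n)$ is a partition of all 3-subsets of an $(n+1)$-set $X$ into block sets $\mathcal{B}_x$, $x\in X$, such that each $(X\setminus\{x\},\mathcal{B}_x)$ is a $\mathrm{KTS}(n)$. *)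

From mathcomp Require Import all_boot.
Set Implicit Arguments. Unset Strict Implicit. Unset Printing Implicit Defensive.

(* Words of length n over Z_q, with Z_q represented as 'I_q (0 = ord value 0). *)
Definition word (q n : nat) := {ffun 'I_n -> 'I_q}.

Definition wt (q n : nat) (u : word q n) : nat := #|[set i | val (u i) != 0]|.

Definition hdist (q n : nat) (u v : word q n) : nat := #|[set i | u i != v i]|.

Definition Hqnw (q n w : nat) : {set word q n} := [set u | wt u == w].

Definition is_code (q n d w : nat) (C : {set word q n}) : bool :=
  [&& C != set0, C \subset Hqnw q n w &
      [forall u in C, forall v in C, (u != v) ==> (d <= hdist u v)]].

(* A_q(n,d,w): maximum size of such a code (0 if none exists). *)
Definition Aq (q n d w : nat) : nat :=
  \max_(C : {set word q n} | is_code d w C) #|C|.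

Definition optimal_code (q n d w : nat) (C : {set word q n}) : bool :=
  is_code d w C && (#|C| == Aq q n d w).

Definition TOC (q n d w : nat) (P : {set {set word q n}}) : Prop :=
  partition P (Hqnw q n w) /\ (forall C, C \in P -> optimal_code d w C).

Definition TOC_exists (q n d w : nat) : Prop := exists P, @TOC q n d w P.

Definition STS (T : finType) (X : {set T}) (B : {set {set T}}) : Prop :=
  (forall b, b \in B -> b \subset X /\ #|b| = 3) /\
  (forall x y, x \in X -> y \in X -> x != y ->
     exists! b, b \in B /\ x \in b /\ y \in b).

Definition KTS (T : finType) (X : {set T}) (B : {set {set T}}) : Prop :=
  STS X B /\
  exists R : {set {set {set T}}},
    partition R B /\ (forall Pc, Pc \in R -> partition Pc X).

Definition triples (T : finType) : {set {set T}} := [set b : {set T} | #|b| == 3].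

Definition LKTS (n : nat) : Prop :=
  exists L : {set {set {set 'I_n}}},
    partition L (triples 'I_n) /\ (forall B, B \in L -> KTS [set: 'I_n] B).

Definition OLKTS (n : nat) : Prop :=
  exists B : 'I_n.+1 -> {set {set 'I_n.+1}},
    (forall x y, x != y -> [disjoint B x & B y]) /\
    (\bigcup_(x : 'I_n.+1) B x = triples 'I_n.+1) /\
    (forall x, KTS ([set: 'I_n.+1] :\ x) (B x)).

From HB Require Import structures.
From mathcomp Require Import all_boot ssralg finalg zify.
Set Implicit Arguments. Unset Strict Implicit. Unset Printing Implicit Defensive.
Import GRing.Theory.

(* Each KTS(n) of the (over)large set has (n - 1)/2 parallel classes, an even number since
   n = 1 mod 4, so its classes can be paired up.  In the union of a pair (P, P') of classes
   every point lies on exactly two blocks, so the points can be labelled greedily by vectors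
   h k of F_2^3 that are linearly independent on every block: a new label only has to avoid
   the at most 7 subset sums of the labels already placed on its two blocks.  For i in F_2^3,
   the words supported on the blocks of P and P', with symbol 1 + (<h k, i> xor [b in P]) of
   Z_3 at each point k of the block b, form a code of 2n/3 words.  Two blocks meet in at most
   one point, and if they do they lie in different classes, so their words differ there and
   are at distance at least 5.  An (m, 5, 3)_3 code has at most two words that are nonzero at
   a given coordinate, hence at most 2m/3 words, so these codes are optimal for m = n and for
   m = n + 1.  Finally the inner products <h x, i>, <h y, i>, <h z, i> on a block {x, y, z}
   determine i, so each word of weight 3 lies in exactly one of these codes. *)

Section ConstantWeightCodes.
Variables q m : nat.
Implicit Types (u v : word q m) (C : {set word q m}).

Definition supp u : {set 'I_m} := [set i | val (u i) != 0].

Lemma hdist_suppU u v :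
  {in supp u :&: supp v, forall i, u i != v i} -> hdist u v = #|supp u :|: supp v|.
Proof.
move=> neq_uv; rewrite /hdist; apply: eq_card => i; rewrite !inE.
case: (eqVneq (val (u i)) 0) => u0; case: (eqVneq (val (v i)) 0) => v0 /=.
- by apply/negbTE/negPn/eqP/val_inj; rewrite u0 v0.
- by apply/eqP => e; rewrite -e u0 eqxx in v0.
- by apply/eqP => e; rewrite e v0 eqxx in u0.
- by apply: neq_uv; rewrite !inE u0 v0.
Qed.

Lemma hdist_lt_suppU u v x :
  x \in supp u -> u x = v x -> hdist u v < #|supp u :|: supp v|.
Proof.
move=> xu eq_uv; apply: proper_card; apply/properP; split.
  apply/subsetP=> i; rewrite !inE; apply: contraR => /norP[/negbNE/eqP u0 /negbNE/eqP v0].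
  by apply/eqP; apply: val_inj; rewrite u0 v0.
by exists x; [rewrite inE xu | rewrite inE eq_uv eqxx].
Qed.

Lemma card_ord_nonzero : #|[set k : 'I_q | val k != 0]| = q.-1.
Proof.
case: q => [|q'] /=; first by apply/eqP; rewrite cards_eq0 -subset0; apply/subsetP => -[].
have -> : [set k : 'I_q'.+1 | val k != 0] = [set~ ord0] by apply/setP => k; rewrite !inE.
by rewrite cardsC1 card_ord.
Qed.

Lemma card_code_nonzero_at d w C x : is_code d w C -> 2 * w <= d + 1 ->
  #|[set u in C | val (u x) != 0]| <= q.-1.
Proof.
case/and3P=> _ /subsetP wtC /forall_inP distC le_w_d.
have wt_supp u : u \in C -> #|supp u| = w by move/wtC; rewrite inE => /eqP.
have inj_x : {in [set u in C | val (u x) != 0] &, injective (fun u => u x)}.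
  move=> u v /setIdP[uC ux] /setIdP[vC vx] eq_uv; apply/eqP; apply: contraT => neq_uv.
  have /forall_inP/(_ v vC)/implyP/(_ neq_uv) d_le := distC u uC.
  have xu : x \in supp u by rewrite inE.
  have lt_uv := hdist_lt_suppU xu eq_uv.
  have : 0 < #|supp u :&: supp v| by apply/card_gt0P; exists x; rewrite !inE ux vx.
  have := cardsUI (supp u) (supp v); rewrite !wt_supp //; lia.
rewrite -(card_in_imset inj_x) -card_ord_nonzero; apply: subset_leq_card.
by apply/subsetP => _ /imsetP[u /setIdP[_ ux] ->]; rewrite inE.
Qed.

Lemma card_code_le d w C : is_code d w C -> 2 * w <= d + 1 -> w * #|C| <= q.-1 * m.
Proof.
move=> codeC le_w_d; have /and3P[_ /subsetP wtC _] := codeC.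
have -> : w * #|C| = \sum_(u in C) #|supp u|.
  rewrite mulnC -sum_nat_const; apply: eq_bigr => u /wtC.
  by rewrite inE => /eqP.
under eq_bigr do rewrite -sum1_card big_mkcond /=.
have -> : q.-1 * m = \sum_(x < m) q.-1 by rewrite sum_nat_const card_ord mulnC.
rewrite exchange_big /=; apply: leq_sum => x _; rewrite -big_mkcondr sum1dep_card.
apply: leq_trans (card_code_nonzero_at x codeC le_w_d).
by apply: subset_leq_card; apply/subsetP => u; rewrite !inE.
Qed.

Lemma optimal_code_of_card d w C : is_code d w C -> 2 * w <= d + 1 ->
  q.-1 * m < w * #|C|.+1 -> optimal_code d w C.
Proof.
move=> codeC le_w_d lt_C; rewrite /optimal_code codeC eqn_leq.
rewrite (@leq_bigmax_cond _ _ (fun C' => #|C'|) _ codeC) /=.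
apply/bigmax_leqP => C' codeC'; rewrite -ltnS -(ltn_pmul2l (_ : 0 < w)).
  exact: leq_ltn_trans (card_code_le codeC' le_w_d) lt_C.
by rewrite lt0n; apply: contraTneq lt_C => ->.
Qed.
End ConstantWeightCodes.

Lemma trivIset_eq (T : finType) (P : {set {set T}}) b b' x :
  trivIset P -> b \in P -> b' \in P -> x \in b -> x \in b' -> b = b'.
Proof. by move=> tP bP b'P xb xb'; rewrite -(def_pblock tP bP xb) (def_pblock tP b'P xb'). Qed.

Section Steiner.
Variable T : finType.
Implicit Types (X b : {set T}) (B P : {set {set T}}) (R : {set {set {set T}}}).

Lemma card3_set3 b x : #|b| = 3 -> x \in b ->
  exists y z, [/\ b = [set x; y; z], x != y, x != z & y != z].
Proof.
move=> card_b xb; have /cards2P[y [z [yz eq_bx]]] : #|b :\ x| == 2.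
  by move: card_b; rewrite (cardsD1 x) xb add1n => -[->].
have /setD1P[yx _] : y \in b :\ x by rewrite eq_bx !inE eqxx.
have /setD1P[zx _] : z \in b :\ x by rewrite eq_bx !inE eqxx orbT.
exists y, z; split; rewrite 1?(eq_sym x) //.
by rewrite -(setD1K xb) eq_bx setUA.
Qed.

Lemma sts_block_eq X B b b' x y : STS X B -> b \in B -> b' \in B ->
  x \in b -> y \in b -> x \in b' -> y \in b' -> x != y -> b = b'.
Proof.
case=> blocks pairs bB b'B xb yb xb' yb' xy.
have [/subsetP bX _] := blocks b bB.
have [c [_ uniq_c]] := pairs x y (bX x xb) (bX y yb) xy.
by rewrite -(uniq_c b) ?(uniq_c b').
Qed.

Lemma sts_meet_le1 X B b b' : STS X B -> b \in B -> b' \in B -> b != b' ->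
  #|b :&: b'| <= 1.
Proof.
move=> sts bB b'B; apply: contraR; rewrite -ltnNge.
case/card_gt1P=> x [y [/setIP[xb xb'] /setIP[yb yb'] xy]].
by rewrite (sts_block_eq sts bB b'B xb yb xb' yb' xy).
Qed.

(* Deleting x0 from the blocks through it partitions X :\ x0 into pairs. *)
Lemma sts_card X B x0 : STS X B -> x0 \in X ->
  #|X| = (#|[set b in B | x0 \in b]|).*2.+1.
Proof.
move=> sts x0X; have [blocks pairs] := sts.
set Bx := [set b in B | x0 \in b].
have inj_D1 : {in Bx &, injective (fun b => b :\ x0)}.
  move=> b b' /setIdP[_ x0b] /setIdP[_ x0b'] eq_b.
  by rewrite -(setD1K x0b) -(setD1K x0b') eq_b.
have card_D1 b : b \in Bx -> #|b :\ x0| = 2.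
  case/setIdP=> bB x0b; have [_ card_b] := blocks b bB.
  by move: card_b; rewrite (cardsD1 x0) x0b add1n => -[].
have part : partition [set b :\ x0 | b in Bx] (X :\ x0).
  apply/and3P; split.
  - apply/eqP/setP=> y; apply/bigcupP/setD1P => [[_ /imsetP[b bBx ->] /setD1P[yx0 yb]]|[yx0 yX]].
      by have [/subsetP bX _] := blocks b (setIdP bBx).1; split; last exact: bX.
    rewrite eq_sym in yx0; have [c [[cB [x0c yc]] _]] := pairs x0 y x0X yX yx0.
    by exists (c :\ x0); [apply: imset_f; rewrite inE cB | rewrite !inE eq_sym yx0].
  - apply/trivIsetP => _ _ /imsetP[b /setIdP[bB x0b] ->] /imsetP[b' /setIdP[b'B x0b'] ->].
    rewrite -setI_eq0; apply: contraNT => /set0Pn[y /setIP[/setD1P[yx0 yb] /setD1P[_ yb']]].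
    by rewrite eq_sym in yx0; rewrite (sts_block_eq sts bB b'B x0b yb x0b' yb' yx0).
  - apply/imsetP => -[b bBx /esym/eqP]; apply/negP.
    by rewrite -cards_eq0 card_D1.
have card2 : {in [set b :\ x0 | b in Bx], forall A : {set T}, #|A| = 2}.
  by move=> _ /imsetP[b bBx ->]; exact: card_D1.
have := card_uniform_partition card2 part.
by rewrite card_in_imset // (cardsD1 x0 X) x0X -mul2n mulnC => ->.
Qed.

Lemma resolution_card X B R : STS X B -> partition R B ->
  {in R, forall P, partition P X} -> X != set0 -> #|X| = (#|R|).*2.+1.
Proof.
move=> sts partR partX /set0Pn[x0 x0X]; rewrite (sts_card sts x0X); congr (_.*2.+1).
have x0_cover P : P \in R -> x0 \in cover P by move=> PR; rewrite (cover_partition (partX P PR)).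
have inj : {in R &, injective (fun P => pblock P x0)}.
  move=> P P' PR P'R eq_P; apply: (trivIset_eq (partition_trivIset partR) PR P'R).
    exact: pblock_mem (x0_cover P PR).
  by rewrite eq_P; apply: pblock_mem; apply: x0_cover.
rewrite -(card_in_imset inj); apply: eq_card => b; apply/setIdP/imsetP => [[bB x0b]|[P PR ->]].
  have bR : b \in cover R by rewrite (cover_partition partR).
  exists (pblock R b); first exact: pblock_mem.
  by rewrite (def_pblock (partition_trivIset (partX _ (pblock_mem bR))) _ x0b) // mem_pblock.
split; last by rewrite mem_pblock x0_cover.
by apply: (subsetP (partitionS partR PR)); apply: pblock_mem; apply: x0_cover.
Qed.
End Steiner.

Definition pair_index (k : nat) : nat := if odd k then k.-1 else k.+1.

Lemma odd_pair_index k : odd (pair_index k) = ~~ odd k.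
Proof. by case: k => [|k] //; rewrite /pair_index /=; case odd_k: (odd k); rewrite /= ?odd_k. Qed.

Lemma pair_indexK : involutive pair_index.
Proof. by case=> [|k] //; rewrite /pair_index /=; case odd_k: (odd k); rewrite /= ?odd_k. Qed.

Section Pairing.
Variables (A : finType) (R : {set A}).
Implicit Types P Q : A.

(* The elements at positions 2k and 2k + 1 of [enum R] are mates; the even one leads. *)
Definition mate P : A := nth P (enum R) (pair_index (index P (enum R))).
Definition leader P : bool := ~~ odd (index P (enum R)).

Hypothesis even_R : ~~ odd #|R|.

Lemma pair_index_lt P : P \in R -> pair_index (index P (enum R)) < size (enum R).
Proof.
move=> PR; have ltP : index P (enum R) < size (enum R) by rewrite index_mem mem_enum.
rewrite /pair_index; case: ifP => [_|even_k]; first exact: leq_ltn_trans (leq_pred _) ltP.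
move: even_R; rewrite ltn_neqAle ltP andbT cardE; apply: contra => /eqP <-.
by rewrite /= even_k.
Qed.

Lemma index_mate P : P \in R -> index (mate P) (enum R) = pair_index (index P (enum R)).
Proof. by move=> PR; rewrite index_uniq ?enum_uniq ?pair_index_lt. Qed.

Lemma mate_in P : P \in R -> mate P \in R.
Proof. by move=> PR; rewrite -mem_enum mem_nth ?pair_index_lt. Qed.

Lemma leader_mate P : P \in R -> leader (mate P) = ~~ leader P.
Proof. by move=> PR; rewrite /leader index_mate // odd_pair_index. Qed.

Lemma mate_neq P : P \in R -> mate P != P.
Proof. by move=> PR; apply/eqP => fixP; have := leader_mate PR; rewrite fixP; case: (leader P). Qed.

Lemma mateK P : P \in R -> mate (mate P) = P.
Proof. by move=> PR; rewrite {1}/mate index_mate // pair_indexK nth_index ?mem_enum. Qed.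

Lemma leader_eq P P' Q : P \in R -> P' \in R -> leader P -> leader P' ->
  Q \in [set P; mate P] -> Q \in [set P'; mate P'] -> P = P'.
Proof.
move=> PR P'R lP lP'; rewrite !inE => /orP[]/eqP-> /orP[]/eqP eqQ //.
- by move: lP'; rewrite -[P'](mateK P'R) -eqQ leader_mate // lP.
- by move: lP'; rewrite -eqQ leader_mate // lP.
- by rewrite -(mateK PR) eqQ mateK.
Qed.
End Pairing.

Section FreeOn.
Local Open Scope ring_scope.
Variables (T : finType) (V : zmodType).
Implicit Types (h : T -> V) (S U : {set T}).

(* Over F_2, as for [bits3] below, this says that h is linearly independent on S. *)
Definition free_on h S : Prop :=
  forall U, U \subset S -> U != set0 -> \sum_(k in U) h k != 0.

Definition free3 (a b c : V) : bool :=
  [&& a != 0, b != 0, c != 0, a + b != 0, a + c != 0, b + c != 0 & a + b + c != 0].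

Lemma free_on_set0 h : free_on h set0.
Proof. by move=> U; rewrite subset0 => ->. Qed.

Lemma free_on_eq h h' S : {in S, h =1 h'} -> free_on h S -> free_on h' S.
Proof.
move=> eq_h free_h U /subsetP sub_U nz_U.
by rewrite -(eq_bigr _ (fun k kU => eq_h k (sub_U k kU))); apply: free_h => //; apply/subsetP.
Qed.

Lemma free_on_set3 h x y z : x != y -> x != z -> y != z ->
  free_on h [set x; y; z] -> free3 (h x) (h y) (h z).
Proof.
move=> xy xz yz free_h; set S := [set x; y; z].
have xS : x \in S by rewrite !inE eqxx.
have yS : y \in S by rewrite !inE eqxx !orbT.
have zS : z \in S by rewrite !inE eqxx !orbT.
have nz1 k : k \in S -> h k != 0.
  move=> kS; have := free_h [set k]; rewrite big_set1 sub1set; apply=> //.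
  by apply/set0Pn; exists k; rewrite inE.
have nz2 k l : k \in S -> l \in S -> k != l -> h k + h l != 0.
  move=> kS lS kl; have := free_h [set k; l]; rewrite big_setU1 ?inE // big_set1.
  apply; first by rewrite subUset !sub1set kS lS.
  by apply/set0Pn; exists k; rewrite !inE eqxx.
have nz3 : h x + h y + h z != 0.
  have := free_h S (subxx S); rewrite /S -setUA big_setU1 ?big_setU1 ?inE ?negb_or ?xy ?xz //=.
  by rewrite big_set1 addrA; apply; apply/set0Pn; exists x; rewrite !inE eqxx.
by rewrite /free3 !nz1 ?nz2 ?nz3.
Qed.

End FreeOn.

Section FreeLabelling.
Local Open Scope ring_scope.
Variables (T : finType) (V : finZmodType).
Implicit Types (h : T -> V) (S A : {set T}).

Definition subset_sums h S : {set V} := [set \sum_(k in U) h k | U : {set T} in powerset S].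

Lemma card_subset_sums h S : #|subset_sums h S| <= 2 ^ #|S|.
Proof. by rewrite -card_powerset leq_imset_card. Qed.

Lemma subset_sums0 h S : 0 \in subset_sums h S.
Proof. by apply/imsetP; exists set0; rewrite ?big_set0 // powersetE sub0set. Qed.

Lemma free_on_setU1 h S x v : x \notin S -> free_on h S -> - v \notin subset_sums h S ->
  free_on (fun k => if k == x then v else h k) (x |: S).
Proof.
move=> xS free_h v_out U sub_U nz_U; pose h' k := if k == x then v else h k.
change (\sum_(k in U) h' k != 0).
have eq_h : {in S, h =1 h'} by move=> k kS; rewrite /h'; case: eqP => // kx; rewrite -kx kS in xS.
have [xU | xU] := boolP (x \in U).
  rewrite (big_setD1 x xU) {1}/h' eqxx (eq_bigr h) => [|k /setD1P[kx _]]; last first.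
    by rewrite /h' (negbTE kx).
  apply: contra v_out; rewrite addr_eq0 => /eqP ->; rewrite opprK.
  by apply/imsetP; exists (U :\ x); rewrite // powersetE subDset.
apply: (free_on_eq eq_h free_h) nz_U; apply/subsetP => k kU.
by have /setU1P[kx|//] := subsetP sub_U k kU; rewrite -kx kU in xU.
Qed.

Section Greedy.
Variables (X : {set T}) (P1 P2 : {set {set T}}).
Hypotheses (part1 : partition P1 X) (part2 : partition P2 X).
Hypothesis small : {in P1 :|: P2, forall b : {set T}, #|b| <= 3}.
Hypothesis big_V : 7 < #|V|.

Lemma free_labelling_step h A x : x \in X -> x \notin A ->
  {in P1 :|: P2, forall b : {set T}, free_on h (b :&: A)} ->
  exists v, {in P1 :|: P2, forall b : {set T},
    free_on (fun k => if k == x then v else h k) (b :&: (x |: A))}.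
Proof.
move=> xX xA free_h; pose F P := subset_sums h (pblock P x :&: A).
have card_F P : partition P X -> P \subset P1 :|: P2 -> #|F P| <= 4.
  move=> partP /subsetP subP; have xP : x \in cover P by rewrite (cover_partition partP).
  have le2 : #|pblock P x :&: A| <= 2.
    have := small (subP _ (pblock_mem xP)); rewrite (cardsD1 x) mem_pblock xP add1n ltnS.
    apply: leq_trans; apply: subset_leq_card; apply/subsetP => k /setIP[kb kA].
    by rewrite !inE kb andbT; apply: contraNneq xA => <-.
  exact: leq_trans (card_subset_sums _ _) (leq_pexp2l _ le2).
have card_F12 : #|F P1 :|: F P2| <= 7.
  have : 0 < #|F P1 :&: F P2| by apply/card_gt0P; exists 0; rewrite inE !subset_sums0.
  have := cardsUI (F P1) (F P2).
  have := card_F P1 part1 (subsetUl _ _); have := card_F P2 part2 (subsetUr _ _); lia.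
have /subsetPn[w _ w_out] : ~~ ([set: V] \subset F P1 :|: F P2).
  by apply: contraL big_V => /subset_leq_card; rewrite cardsT -leqNgt => /leq_trans; apply.
exists (- w) => b bP; have [xb | xb] := boolP (x \in b).
  rewrite setIUr (setIidPr _) ?sub1set //; apply: free_on_setU1 (free_h b bP) _.
    by rewrite inE (negbTE xA) andbF.
  rewrite opprK; apply: contra w_out => w_b; apply/setUP.
  have tP1 := partition_trivIset part1; have tP2 := partition_trivIset part2.
  by case/setUP: bP => bP; [left | right]; rewrite /F (def_pblock _ bP xb).
have -> : b :&: (x |: A) = b :&: A.
  by apply/setP => k; rewrite !inE; case: eqP => // ->; rewrite (negbTE xb).
by apply: free_on_eq (free_h b bP) => k /setIP[kb _]; case: eqP => // kx; rewrite -kx kb in xb.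
Qed.

Lemma free_labelling_exists : exists h : T -> V, {in P1 :|: P2, forall b, free_on h b}.
Proof.
suff [h free_h] : exists h : T -> V, {in P1 :|: P2, forall b, free_on h (b :&: X)}.
  exists h => b bP; rewrite -(setIidPl (_ : b \subset X)); first exact: free_h.
  by case/setUP: bP => bP; [exact: partitionS part1 bP | exact: partitionS part2 bP].
rewrite -[X]set_enum; have : {subset enum X <= X} by move=> x; rewrite mem_enum.
elim: (enum X) => [|x s IHs] sub_sX.
  by exists (fun=> 0) => b _; rewrite set_nil setI0; apply: free_on_set0.
have [h free_h] : exists h : T -> V, {in P1 :|: P2, forall b, free_on h (b :&: [set:: s])}.
  by apply: IHs => y ys; apply: sub_sX; rewrite inE ys orbT.
rewrite set_cons; have [xs | xs] := boolP (x \in [set:: s]).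
  have -> : x |: [set:: s] = [set:: s] by apply/setUidPr; rewrite sub1set.
  by exists h.
have [v free_v] := free_labelling_step (sub_sX x (mem_head x s)) xs free_h.
by exists (fun k => if k == x then v else h k).
Qed.
End Greedy.
End FreeLabelling.

Definition bits3 := (bool * bool * bool)%type.
HB.instance Definition _ := Finite.on bits3.

Definition add_bits3 (a b : bits3) : bits3 := (a.1.1 (+) b.1.1, a.1.2 (+) b.1.2, a.2 (+) b.2).

Lemma add_bits3A : associative add_bits3.
Proof. by case=> [[[] []] []] [[[] []] []] [[[] []] []]. Qed.

Lemma add_bits3C : commutative add_bits3.
Proof. by case=> [[[] []] []] [[[] []] []]. Qed.

Lemma add0_bits3 : left_id (false, false, false) add_bits3.
Proof. by case=> [[? ?] ?]. Qed.

Lemma addN_bits3 : left_inverse (false, false, false) id add_bits3.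
Proof. by case=> [[[] []] []]. Qed.

HB.instance Definition _ :=
  GRing.isZmodule.Build bits3 add_bits3A add_bits3C add0_bits3 addN_bits3.

Lemma card_bits3 : #|{: bits3}| = 8.
Proof. by rewrite !card_prod card_bool. Qed.

Definition dot (a i : bits3) : bool := (a.1.1 && i.1.1) (+) (a.1.2 && i.1.2) (+) (a.2 && i.2).

Definition dot3 (a b c i : bits3) : bits3 := (dot a i, dot b i, dot c i).

Definition bits3_enum : seq bits3 :=
  [:: (false, false, false); (false, false, true); (false, true, false); (false, true, true);
      (true, false, false); (true, false, true); (true, true, false); (true, true, true)].

Lemma mem_bits3_enum v : v \in bits3_enum.
Proof. by case: v => [[[] []] []]. Qed.

Lemma dot3_inj a b c : free3 a b c -> injective (dot3 a b c).
Proof.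
have: all (fun a => all (fun b => all (fun c => free3 a b c ==>
  all (fun i => all (fun i' => (dot3 a b c i == dot3 a b c i') ==> (i == i'))
    bits3_enum) bits3_enum) bits3_enum) bits3_enum) bits3_enum.
  by vm_compute.
move=> /allP/(_ a (mem_bits3_enum a))/allP/(_ b (mem_bits3_enum b)).
move=> /allP/(_ c (mem_bits3_enum c))/implyP + abc i i' => /(_ abc).
move=> /allP/(_ i (mem_bits3_enum i))/allP/(_ i' (mem_bits3_enum i'))/implyP inj.
by move=> eq_i; apply/eqP/inj; rewrite eq_i.
Qed.

Definition entry (side c : bool) : 'I_3 := Ordinal (leq_b1 (side (+) c) : (side (+) c).+1 < 3).

Lemma entry_inj side : injective (entry side).
Proof. by case: side => [] [] []. Qed.

Lemma entry_side side side' c : side != side' -> entry side c != entry side' c.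
Proof. by case: side side' c => [] [] []. Qed.

Lemma entry_onto side (a : 'I_3) : val a != 0 -> exists c, entry side c = a.
Proof.
case: a => [[|[|[|//]]] lt_a] // _.
  by exists side; apply: val_inj; rewrite /= addbb.
by exists (~~ side); apply: val_inj; rewrite /= addbN addbb.
Qed.

Definition block_word m (b : {set 'I_m}) (side : bool) (c : 'I_m -> bool) : word 3 m :=
  [ffun k => if k \in b then entry side (c k) else ord0].

Lemma supp_block_word m (b : {set 'I_m}) side c : supp (block_word b side c) = b.
Proof. by apply/setP => k; rewrite inE ffunE; case: (k \in b). Qed.

Definition pair_code m (P P' : {set {set 'I_m}}) (h : 'I_m -> bits3) (i : bits3) :
  {set word 3 m} := [set block_word b (b \in P) (fun k => dot (h k) i) | b in P :|: P'].

Lemma supp_pair_code m (P P' : {set {set 'I_m}}) h i u :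
  u \in pair_code P P' h i -> supp u \in P :|: P'.
Proof. by case/imsetP=> b bP ->; rewrite supp_block_word. Qed.

Record labelled_pair m (X : {set 'I_m}) (B P P' : {set {set 'I_m}}) (h : 'I_m -> bits3) : Prop :=
  LabelledPair {
    lpair_sts : STS X B;
    lpair_partl : partition P X;
    lpair_partr : partition P' X;
    lpair_sub : P :|: P' \subset B;
    lpair_disj : [disjoint P & P'];
    lpair_free : {in P :|: P', forall b, free_on h b} }.

Section PairCode.
Variables (m : nat) (X : {set 'I_m}) (B P P' : {set {set 'I_m}}) (h : 'I_m -> bits3).
Hypothesis pairPP' : labelled_pair X B P P' h.
Let sts := lpair_sts pairPP'.
Let partP := lpair_partl pairPP'.
Let partP' := lpair_partr pairPP'.
Let subPB := lpair_sub pairPP'.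
Let disjPP' := lpair_disj pairPP'.
Let free_h := lpair_free pairPP'.
Local Notation pair_code := (pair_code P P' h).

Lemma card_block b : b \in P :|: P' -> #|b| = 3.
Proof. by move=> bP; have [/(_ b (subsetP subPB b bP))[]] := sts. Qed.

Lemma block_dot3_bij b x : b \in P :|: P' -> x \in b -> exists y z,
  [/\ b = [set x; y; z] & bijective (dot3 (h x) (h y) (h z))].
Proof.
move=> bP xb; have [y [z [def_b xy xz yz]]] := card3_set3 (card_block bP) xb.
exists y, z; split=> //; apply/injF_bij/dot3_inj/free_on_set3 => //.
by rewrite -def_b; apply: free_h.
Qed.

Lemma block_side_neq b b' x : b \in P :|: P' -> b' \in P :|: P' -> b != b' ->
  x \in b -> x \in b' -> (b \in P) != (b' \in P).
Proof.
move=> bP b'P neq_b xb xb'; apply: contra neq_b => /eqP eq_side; apply/eqP.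
have [bPl | bPr] := boolP (b \in P).
  have b'Pl : b' \in P by rewrite -eq_side.
  exact: trivIset_eq (partition_trivIset partP) bPl b'Pl xb xb'.
have bP' : b \in P' by case/setUP: bP => //; rewrite (negbTE bPr).
have b'P' : b' \in P' by case/setUP: b'P => //; rewrite -eq_side (negbTE bPr).
exact: trivIset_eq (partition_trivIset partP') bP' b'P' xb xb'.
Qed.

Lemma card_pair_code i : 3 * #|pair_code i| = 2 * #|X|.
Proof.
rewrite card_in_imset => [|b b' _ _ /(congr1 (@supp 3 m))]; last by rewrite !supp_block_word.
have card3 (Q : {set {set 'I_m}}) : Q \subset P :|: P' -> {in Q, forall b : {set 'I_m}, #|b| = 3}.
  by move=> /subsetP subQ b /subQ; apply: card_block.
rewrite cardsU (disjoint_setI0 disjPP') cards0 subn0 mul2n -addnn.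
rewrite {1}(card_uniform_partition (card3 P (subsetUl _ _)) partP).
by rewrite (card_uniform_partition (card3 P' (subsetUr _ _)) partP') mulnDr !(mulnC 3).
Qed.

Lemma pair_code_dist i u v : u \in pair_code i -> v \in pair_code i -> u != v -> 5 <= hdist u v.
Proof.
move=> /imsetP[b bP ->] /imsetP[b' b'P ->] neq_uv.
have neq_b : b != b' by apply: contraNneq neq_uv => ->.
rewrite hdist_suppU !supp_block_word.
  have := cardsUI b b'; rewrite (card_block bP) (card_block b'P).
  have := sts_meet_le1 sts (subsetP subPB b bP) (subsetP subPB b' b'P) neq_b; lia.
move=> x /setIP[xb xb']; rewrite !ffunE xb xb'.
exact/entry_side/(block_side_neq bP b'P neq_b xb xb').
Qed.

Lemma pair_code_is_code i : X != set0 -> is_code 5 3 (pair_code i).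
Proof.
move=> nzX; apply/and3P; split.
- by rewrite -card_gt0 -(ltn_pmul2l (isT : 0 < 3)) card_pair_code muln0 muln_gt0 card_gt0.
- apply/subsetP => _ /imsetP[b bP ->].
  by rewrite inE /wt -/(supp _) supp_block_word card_block.
- apply/forall_inP => u uC; apply/forall_inP => v vC; apply/implyP.
  exact: pair_code_dist uC vC.
Qed.

Lemma pair_code_optimal i : X != set0 -> m <= #|X|.+1 -> optimal_code 5 3 (pair_code i).
Proof.
move=> nzX le_m; apply: optimal_code_of_card (pair_code_is_code i nzX) _ _ => //.
by rewrite mulnS card_pair_code /=; move: le_m; set k := #|X|; lia.
Qed.

Lemma pair_code_cover u : u \in Hqnw 3 m 3 -> supp u \in P :|: P' ->
  exists i, u \in pair_code i.
Proof.
rewrite inE => /eqP wt_u tP; set t := supp u in tP.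
have [x xt] : exists x, x \in t by apply/card_gt0P; rewrite [#|t|]wt_u.
have [y [z [def_t [f fK Kf]]]] := block_dot3_bij tP xt.
have bit k : k \in t -> exists c, entry (t \in P) c = u k by rewrite inE => /entry_onto.
have yt : y \in t by rewrite def_t !inE eqxx orbT.
have zt : z \in t by rewrite def_t !inE eqxx !orbT.
have [cx ex] := bit x xt; have [cy ey] := bit y yt; have [cz ez] := bit z zt.
have [dx dy dz] := Kf (cx, cy, cz).
exists (f (cx, cy, cz)); apply/imsetP; exists t => //; apply/ffunP => k; rewrite ffunE.
have [kt | kt] := boolP (k \in t); last by apply: val_inj; move: kt; rewrite inE negbK => /eqP.
by move: kt; rewrite {1}def_t !inE => /orP[/orP[]|] /eqP->; rewrite ?(dx, ex) ?(dy, ey) ?(dz, ez).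
Qed.

Lemma pair_code_uniq u i i' : u \in pair_code i -> u \in pair_code i' -> i = i'.
Proof.
move=> /imsetP[b bP ->] /imsetP[b' _ eq_u].
have eq_b : b = b' by have := congr1 (@supp 3 m) eq_u; rewrite !supp_block_word.
subst b'; have [x xb] : exists x, x \in b by apply/card_gt0P; rewrite card_block.
have [y [z [def_b [f fK _]]]] := block_dot3_bij bP xb.
have dot_eq k : k \in b -> dot (h k) i = dot (h k) i'.
  by move=> kb; move/ffunP/(_ k): eq_u; rewrite !ffunE kb => /entry_inj.
by apply: (can_inj fK); rewrite /dot3 !dot_eq // def_b !inE eqxx ?orbT.
Qed.
End PairCode.

Definition labelled_resolution (T : finType) (X : {set T}) (B : {set {set T}})
    (R : {set {set {set T}}}) (h : {set {set T}} -> T -> bits3) : Prop :=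
  [/\ partition R B, {in R, forall P, partition P X}, ~~ odd #|R|
    & {in R, forall P, {in P :|: mate R P, forall b, free_on (h P) b}}].

Lemma labelled_resolution_exists (T : finType) (X : {set T}) (B : {set {set T}}) :
  KTS X B -> #|X| %% 4 = 1 -> exists R h, labelled_resolution X B R h.
Proof.
case=> sts [R [partR partX]] X_mod4.
have even_R : ~~ odd #|R|.
  have nzX : X != set0 by rewrite -card_gt0; move: X_mod4; set k := #|X|; lia.
  move: X_mod4; rewrite (resolution_card sts partR partX nzX) -mul2n => R_mod2.
  have : #|R| %% 2 = 0 by move: R_mod2; set r := #|R|; lia.
  by rewrite modn2; case: odd.
have /fin_all_exists[h free_h] : forall P : {set {set T}}, exists hP : T -> bits3,
    P \in R -> {in P :|: mate R P, forall b, free_on hP b}.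
  move=> P; have [PR | _] := boolP (P \in R); last by exists (fun=> 0%R).
  have subB : P :|: mate R P \subset B by rewrite subUset !(partitionS partR) ?mate_in.
  have small : {in P :|: mate R P, forall b : {set T}, #|b| <= 3}.
    by move=> b /(subsetP subB) bB; have [/(_ b bB)[_ ->]] := sts.
  have big_V : 7 < #|{: bits3}| by rewrite card_bits3.
  have [hP free_hP] :=
    free_labelling_exists (partX P PR) (partX _ (mate_in even_R PR)) small big_V.
  by exists hP.
by exists R, h; split.
Qed.

Section LargeSet.
Variables (m : nat) (J : finType) (X : J -> {set 'I_m}) (Bl : J -> {set {set 'I_m}}).
Hypothesis kts : forall j, KTS (X j) (Bl j).
Hypothesis card_X : forall j, #|X j| %% 4 = 1.
Hypothesis le_m : forall j, m <= #|X j|.+1.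
Hypothesis cover_Bl : forall t : {set 'I_m}, #|t| = 3 -> exists j, t \in Bl j.
Hypothesis disj_Bl : forall j j' t, t \in Bl j -> t \in Bl j' -> j = j'.

Lemma X_neq0 j : X j != set0.
Proof. by rewrite -card_gt0; move: (card_X j); set k := #|X j|; lia. Qed.

Section Labels.
Variables (R : J -> {set {set {set 'I_m}}}) (h : J -> {set {set 'I_m}} -> 'I_m -> bits3).
Hypothesis lres : forall j, labelled_resolution (X j) (Bl j) (R j) (h j).

Definition valid_label (l : J * {set {set 'I_m}} * bits3) : bool :=
  let: (j, P, _) := l in (P \in R j) && leader (R j) P.

Definition label_code (l : J * {set {set 'I_m}} * bits3) : {set word 3 m} :=
  let: (j, P, i) := l in pair_code P (mate (R j) P) (h j P) i.

Lemma labelled_pair_mate j P : P \in R j ->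
  labelled_pair (X j) (Bl j) P (mate (R j) P) (h j P).
Proof.
move=> PR; have [partR partX even_R free_h] := lres j; have mPR := mate_in even_R PR.
split; [by case: (kts j) | exact: partX | exact: partX | | | exact: free_h].
  by rewrite subUset !(partitionS partR).
apply: (elimT trivIsetP (partition_trivIset partR)) => //.
by rewrite eq_sym (mate_neq even_R PR).
Qed.

Lemma label_code_optimal l : valid_label l -> optimal_code 5 3 (label_code l).
Proof.
case: l => [[j P] i] /andP[PR _].
exact: pair_code_optimal (labelled_pair_mate PR) i (X_neq0 j) (le_m j).
Qed.

Lemma pblock_mate j P t : P \in R j -> t \in P :|: mate (R j) P ->
  pblock (R j) t \in [set P; mate (R j) P].
Proof.
have [partR _ even_R _] := lres j; have tR := partition_trivIset partR.
move=> PR /setUP[tP | tP]; rewrite !inE (def_pblock tR _ tP) ?eqxx ?orbT //.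
exact: mate_in.
Qed.

Lemma label_code_cover u : u \in Hqnw 3 m 3 -> exists2 l, valid_label l & u \in label_code l.
Proof.
move=> uH; have /eqP wt_u : wt u == 3 by rewrite inE in uH.
have [j tB] := cover_Bl wt_u; have [partR _ even_R _] := lres j.
have tR : supp u \in cover (R j) by rewrite (cover_partition partR).
set Q := pblock (R j) (supp u); have QR : Q \in R j := pblock_mem tR.
pose P := if leader (R j) Q then Q else mate (R j) Q.
have PR : P \in R j by rewrite /P; case: ifP => _; rewrite ?mate_in.
have lP : leader (R j) P by rewrite /P; case: ifP => lQ; rewrite ?leader_mate ?lQ.
have tP : supp u \in P :|: mate (R j) P.
  by rewrite /P; case: ifP => _; rewrite ?mateK // inE mem_pblock tR ?orbT.
have [i ui] := pair_code_cover (labelled_pair_mate PR) uH tP.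
by exists (j, P, i); rewrite /= ?PR.
Qed.

Lemma label_code_uniq l l' u : valid_label l -> valid_label l' ->
  u \in label_code l -> u \in label_code l' -> l = l'.
Proof.
case: l l' => [[j P] i] [[j' P'] i'] /andP[PR lP] /andP[P'R lP'] /= uC uC'.
have tP := supp_pair_code uC; have tP' := supp_pair_code uC'.
have eq_j : j = j'.
  apply: (disj_Bl (t := supp u)).
    exact: subsetP (lpair_sub (labelled_pair_mate PR)) _ tP.
  exact: subsetP (lpair_sub (labelled_pair_mate P'R)) _ tP'.
subst j'; have [_ _ even_R _] := lres j.
have eq_P : P = P' := leader_eq even_R PR P'R lP lP' (pblock_mate PR tP) (pblock_mate P'R tP').
by subst P'; rewrite (pair_code_uniq (labelled_pair_mate PR) uC uC').
Qed.

Lemma toc_of_labelled_resolutions : TOC_exists 3 m 5 3.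
Proof.
pose codes := [set label_code l | l in valid_label].
have nz_code l : valid_label l -> label_code l != set0.
  by case/label_code_optimal/andP => /and3P[].
have disj_code : {in valid_label &, forall l l', l' != l ->
    [disjoint label_code l & label_code l']}.
  move=> l l' vl vl'; rewrite -setI_eq0; apply: contraNT => /set0Pn[u /setIP[ul ul']].
  by rewrite (label_code_uniq vl vl' ul ul').
have [part_codes _] := indexed_partition disj_code nz_code.
exists codes; split; last by move=> _ /imsetP[l vl ->]; exact: label_code_optimal.
suff -> : Hqnw 3 m 3 = cover codes by [].
apply/eqP; rewrite eqEsubset; apply/andP; split; apply/subsetP => u.
  move=> uH; have [l vl ul] := label_code_cover uH.
  by apply/bigcupP; exists (label_code l); first exact: imset_f.
case/bigcupP => _ /imsetP[l vl ->].
by apply/subsetP; case/label_code_optimal/andP: vl => /and3P[].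
Qed.
End Labels.

Lemma toc_of_large_set : TOC_exists 3 m 5 3.
Proof.
have /fin_all_exists[Rh lres] : forall j, exists Rh, labelled_resolution (X j) (Bl j) Rh.1 Rh.2.
  by move=> j; have [R [h lres]] := labelled_resolution_exists (kts j) (card_X j); exists (R, h).
exact: toc_of_labelled_resolutions lres.
Qed.
End LargeSet.

Lemma LKTS_toc n : n %% 4 = 1 -> LKTS n -> TOC_exists 3 n 5 3.
Proof.
move=> n_mod4 [L [partL ktsL]].
apply: (@toc_of_large_set n {B | B \in L} (fun=> [set: 'I_n]) val).
- by case=> B BL; exact: ktsL.
- by move=> _; rewrite cardsT card_ord.
- by move=> _; rewrite cardsT card_ord.
- move=> t card_t; have : t \in cover L by rewrite (cover_partition partL) inE card_t.
  by case/bigcupP => B BL tB; exists (exist _ B BL).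
- move=> [B BL] [B' BL'] t tB tB'; apply: val_inj => /=.
  exact: trivIset_eq (partition_trivIset partL) BL BL' tB tB'.
Qed.

Lemma OLKTS_toc n : n %% 4 = 1 -> OLKTS n -> TOC_exists 3 n.+1 5 3.
Proof.
move=> n_mod4 [B [disjB [coverB ktsB]]].
have card_X x : #|[set: 'I_n.+1] :\ x| = n.
  by move: (cardsD1 x [set: 'I_n.+1]); rewrite cardsT card_ord inE add1n => -[].
apply: (@toc_of_large_set n.+1 'I_n.+1 (fun x => [set: 'I_n.+1] :\ x) B) => //.
- by move=> x; rewrite card_X.
- by move=> x; rewrite card_X.
- move=> t card_t; have : t \in \bigcup_x B x by rewrite coverB inE card_t.
  by case/bigcupP => x _ tx; exists x.
- move=> x y t tx ty; apply/eqP; apply: contraT => /disjB/disjointFr/(_ tx).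
  by rewrite ty.
Qed.

Theorem corollary4p10 (n : nat) :
  n %% 12 = 9 ->
  (LKTS n -> TOC_exists 3 n 5 3) /\ (OLKTS n -> TOC_exists 3 n.+1 5 3).
Proof.
move=> n_mod12; have n_mod4 : n %% 4 = 1 by lia.
by split; [exact: LKTS_toc | exact: OLKTS_toc].
Qed.
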